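(* Let $\mathtt{X}a<_r\mathtt{Y}b<_r\mathtt{Z}c$ be three completing operations in a run $r$ of a linearizable atomic register protocol $P$, where $\mathtt{X}a$ is an $a$-operation, $\mathtt{Y}b$ a $b$-operation and $\mathtt{Z}c$ a $c$-operation. If $a\neq b$, then $a\neq c$.
   Context: Asynchronous message-passing model: $n$ processes, FIFO channels, discrete time $0,1,2,\dots$; an adversarial environment nondeterministically schedules process moves, message deliveries and operation invocations. An operation $\mathtt{X}$ at process $i$ begins with an invocation input from the environment at some time and ends when $i$ performs a matching response at a later time; it completes in $r$ if both occur. $\mathtt{X}<_r\mathtt{Y}$ iff $\mathtt{X}$'s response time is strictly smaller than $\mathtt{Y}$'s invocation time. Registers: a multi-writer multi-reader register with writes (invocation carries value $v$) and reads (response returns a value); default initial value $\bot$. Each value is written at most once in any run; $\mathtt{W}(v)$ denotes the write of $v$. A $v$-operation $\mathtt{X}v$ is a read returning $v$ or the write of $v$. A sequential history is an alternating sequence of invocations and matching responses; an atomic register history is one in which every read returns the most recently written value (or $\bot$ if none). A linearization of $r$ is an atomic register history $H$ consisting of the invocations and responses of all completed operations of $r$, possibly some invocations of pending operations together with matching responses, such that if $\mathtt{X}<_r\mathtt{Y}$ and $\mathtt{Y}$'s invocation is in $H$ then $\mathtt{X}$'s response precedes $\mathtt{Y}$'s invocation in $H$. $P$ is a linearizable atomic register protocol if in every run of $P$ every operation invoked at a nonfaulty process completes and a linearization of the run exists. *)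

From mathcomp Require Import all_boot.
Set Implicit Arguments. Unset Strict Implicit. Unset Printing Implicit Defensive.

(* Register values: [Val] is the type of writable values; a "value" returned
   by a read is an [option Val], with [None] standing for the default
   initial value bottom (which is never written). *)

Inductive opkind (Val : Type) :=
  | ReadOp
  | WriteOp of Val.
Arguments ReadOp {Val}.

(* The register-level view of a run of a protocol with [n] processes in the
   asynchronous message-passing model.  Each operation has a process, a kind
   (read, or write of v), an invocation time, and possibly a response
   (time, returned value; the returned value of a write is irrelevant).
   [faulty i] says that process i is faulty in the run. *)
Record run (Val : Type) (n : nat) := Run {
  rop : Type;
  op_proc : rop -> 'I_n;
  op_kind : rop -> opkind Val;
  op_inv : rop -> nat;
  op_resp : rop -> option (nat * option Val);
  faulty : 'I_n -> bool
}.

Section Defs.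
Variables (Val : Type) (n : nat).
Implicit Types (r : run Val n).

Definition wf_run r : Prop :=
  (forall (o : rop r) t v, op_resp o = Some (t, v) -> op_inv o < t) /\
  (forall (o1 o2 : rop r) (v : Val),
      op_kind o1 = WriteOp v -> op_kind o2 = WriteOp v -> o1 = o2).

Definition completes r (X : rop r) : Prop := exists p, op_resp X = Some p.

Definition precedes r (X Y : rop r) : Prop :=
  exists t v, op_resp X = Some (t, v) /\ t < op_inv Y.

Definition is_vop r (X : rop r) (v : option Val) : Prop :=
  (op_kind X = ReadOp /\ exists t, op_resp X = Some (t, v)) \/
  (exists w, op_kind X = WriteOp w /\ v = Some w).

(* A linearization of r, presented as a sequential history: [pos o = Some k]
   means o appears (as an invocation immediately followed by its matching
   response) at position k of the sequential history, [None] means o is not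
   in it; [hret o] is the value returned by o's response in H (for reads). *)
Definition linearization r (pos : rop r -> option nat)
    (hret : rop r -> option Val) : Prop :=
  (forall o1 o2 k, pos o1 = Some k -> pos o2 = Some k -> o1 = o2) /\
  (forall o t v, op_resp o = Some (t, v) ->
       (exists k, pos o = Some k) /\
       (op_kind o = ReadOp -> hret o = v)) /\
  (forall X Y kY, precedes X Y -> pos Y = Some kY ->
       exists kX, pos X = Some kX /\ kX < kY) /\
  (forall R kR, op_kind R = ReadOp -> pos R = Some kR ->
     ((hret R = None /\
       forall W w kW, op_kind W = WriteOp w -> pos W = Some kW -> ~ kW < kR)
      \/
      (exists W w kW, op_kind W = WriteOp w /\ pos W = Some kW /\ kW < kR /\
         hret R = Some w /\
         forall W' w' kW', op_kind W' = WriteOp w' -> pos W' = Some kW' ->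
           ~ (kW < kW' /\ kW' < kR)))).

(* A protocol is identified with its set of runs. *)
Definition linearizable_protocol (P : run Val n -> Prop) : Prop :=
  forall r, P r ->
    (forall o : rop r, ~~ faulty r (op_proc o) -> completes o) /\
    exists pos hret, @linearization r pos hret.

End Defs.

From mathcomp Require Import all_boot.
From mathcomp Require Import zify.
Set Implicit Arguments. Unset Strict Implicit. Unset Printing Implicit Defensive.

(* Linearize the run and read off, at each position k of the sequential
   history H, the value of the register: the value of the last write at a
   position <= k, or bottom.  A completed v-operation sits at a position where
   the register holds v, and real-time order is respected by H, so
   X <_r Y <_r Z gives positions kX < kY < kZ holding a, b, c.  If c = a then
   the register never changed between kX and kZ: either a is bottom and no
   write precedes kZ at all, or a is written by a single write, which must lie
   before kX (it is the only write of a, and the register already holds a at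
   kX) and is still the last write at kZ.  Either way it holds a at kY too. *)

Section RegisterValue.
Variables (Val : Type) (n : nat) (r : run Val n) (pos : rop r -> option nat).

Definition write_at (W : rop r) (w : Val) (k : nat) : Prop :=
  op_kind W = WriteOp w /\ pos W = Some k.

Definition last_write_upto (k : nat) (W : rop r) (w : Val) (kW : nat) : Prop :=
  [/\ write_at W w kW, kW <= k &
      forall W' w' kW', write_at W' w' kW' -> kW' <= k -> kW' <= kW].

Definition value_at (k : nat) (v : option Val) : Prop :=
  (v = None /\ forall W w kW, write_at W w kW -> k < kW) \/
  (exists W w kW, last_write_upto k W w kW /\ v = Some w).

Lemma value_at_None_le k1 k2 v :
  k1 <= k2 -> value_at k2 None -> value_at k1 v -> v = None.
Proof.
move=> le12 [[_ Hnone]|[W [w [kW [_ //]]]]].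
case=> [[-> //]|[W [w [kW [[HW le1 _] _]]]]].
by have := Hnone W w kW HW; lia.
Qed.

Hypothesis pos_inj : forall o1 o2 k, pos o1 = Some k -> pos o2 = Some k -> o1 = o2.

Lemma last_write_upto_value_at k1 k2 W w kW v :
  last_write_upto k2 W w kW -> kW <= k1 <= k2 -> value_at k1 v -> v = Some w.
Proof.
move=> [HW _ Hlast2] /andP[le1 le12].
case=> [[_ Hnone]|[W1 [w1 [kW1 [[HW1 le11 Hlast1] ->]]]]].
  by have := Hnone W w kW HW; lia.
have eqk : kW1 = kW.
  by have := Hlast2 W1 w1 kW1 HW1; have := Hlast1 W w kW HW; lia.
move: HW HW1 => [kindW posW] [kindW1 posW1]; subst kW1.
rewrite (pos_inj posW1 posW) kindW in kindW1.
by case: kindW1 => ->.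
Qed.

Hypothesis write_once :
  forall (W1 W2 : rop r) w, op_kind W1 = WriteOp w -> op_kind W2 = WriteOp w -> W1 = W2.

Lemma value_at_no_ABA k1 k2 k3 a b :
  k1 <= k2 -> k2 <= k3 ->
  value_at k1 a -> value_at k2 b -> value_at k3 a -> a = b.
Proof.
move=> le12 le23 V1 V2 V3.
case: (V3) => [[Ea _]|[W [w [kW [Hlast3 Ea]]]]]; subst a.
  by rewrite (value_at_None_le le23 V3 V2).
have [le1|lt1] := leqP kW k1.
  by rewrite (last_write_upto_value_at Hlast3 _ V2) //; lia.
case: V1 => [[] //|[W1 [w1 [kW1 [[[kindW1 posW1] le11 _] [Ew]]]]]].
move: Hlast3 => [[kindW posW] _ _]; subst w1.
rewrite (write_once kindW1 kindW) posW in posW1.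
by case: posW1 => ?; lia.
Qed.

End RegisterValue.

Section Linearization.
Variables (Val : Type) (n : nat) (r : run Val n).
Variables (pos : rop r -> option nat) (hret : rop r -> option Val).
Hypothesis lin : linearization pos hret.

Lemma linearization_read_value_at (R : rop r) t v :
  op_kind R = ReadOp -> op_resp R = Some (t, v) ->
  exists k, pos R = Some k /\ value_at pos k v.
Proof.
move=> kindR respR; case: lin => [pos_inj [in_H [_ atomic]]].
have [[k posR] hretR] := in_H R t v respR.
exists k; split=> //.
have no_write_at_k W w : write_at pos W w k -> False.
  by move=> [kindW posW]; rewrite (pos_inj _ _ _ posW posR) kindR in kindW.
case: (atomic R k kindR posR) =>
  [[hret_none Hnone]|[W [w [kW [kindW [posW [ltk [hret_w Hlast]]]]]]]].
- left; split; first by rewrite -(hretR kindR).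
  move=> W w kW HW; have [eqk|nek] := eqVneq kW k.
    by case: (no_write_at_k W w); rewrite -eqk.
  by have := Hnone W w kW HW.1 HW.2; lia.
- right; exists W, w, kW; split; last by rewrite -(hretR kindR).
  split=> [||W' w' kW' HW' le']; [by [] | exact: ltnW |].
  have [eqk|nek] := eqVneq kW' k.
    by case: (no_write_at_k W' w'); rewrite -eqk.
  by have := Hlast W' w' kW' HW'.1 HW'.2; lia.
Qed.

Lemma linearization_write_value_at (W : rop r) w :
  completes W -> op_kind W = WriteOp w ->
  exists k, pos W = Some k /\ value_at pos k (Some w).
Proof.
move=> [[t v] respW] kindW; case: lin => [_ [in_H _]].
have [[k posW] _] := in_H W t v respW.
by exists k; split=> //; right; exists W, w, k.
Qed.

Lemma linearization_vop_value_at (O : rop r) v :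
  completes O -> is_vop O v -> exists k, pos O = Some k /\ value_at pos k v.
Proof.
move=> compO [[kindO [t respO]]|[w [kindO ->]]].
  exact: linearization_read_value_at respO.
exact: linearization_write_value_at.
Qed.

Lemma linearization_precedes_lt (X Y : rop r) kX kY :
  precedes X Y -> pos X = Some kX -> pos Y = Some kY -> kX < kY.
Proof.
move=> XY posX posY; case: lin => [_ [_ [real_time _]]].
have [kX' [posX' lt]] := real_time X Y kY XY posY.
by rewrite posX in posX'; case: posX' => ->.
Qed.

End Linearization.

Theorem lemma16 (Val : Type) (n : nat) (P : run Val n -> Prop)
    (HP : linearizable_protocol P) (r : run Val n) (Hr : P r)
    (Hwf : wf_run r)
    (X Y Z : rop r) (a b c : option Val)
    (HXc : completes X) (HYc : completes Y) (HZc : completes Z)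
    (HX : is_vop X a) (HY : is_vop Y b) (HZ : is_vop Z c)
    (HXY : precedes X Y) (HYZ : precedes Y Z) :
  a <> b -> a <> c.
Proof.
move=> neq_ab eq_ac; subst c.
have [_ [pos [hret lin]]] := HP r Hr.
have [kX [posX VX]] := linearization_vop_value_at lin HXc HX.
have [kY [posY VY]] := linearization_vop_value_at lin HYc HY.
have [kZ [posZ VZ]] := linearization_vop_value_at lin HZc HZ.
have ltXY := linearization_precedes_lt lin HXY posX posY.
have ltYZ := linearization_precedes_lt lin HYZ posY posZ.
apply: neq_ab.
exact: (value_at_no_ABA lin.1 Hwf.2 (ltnW ltXY) (ltnW ltYZ) VX VY VZ).
Qed.
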